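(* Let $A$ be the semi-local highest-score matrix of strings $x$ (length $m$) and $y$ (length $n$), and let $w, r$ be positive integers. To represent the $(w,r)$-restricted highest-score matrix $A^{w,r}$ implicitly, it suffices to store only those critical points $(\hat{\imath}, \hat{\jmath})$ of the unrestricted matrix $A$ for which $\hat{\jmath} - \hat{\imath} < w$; that is, every defined entry $A^{w,r}(i,j)$ is determined by this set of critical points.
   Context: Notation: $[i:j] = \{i, i+1, \ldots, j\}$ and $\langle i:j\rangle = \{i+\tfrac12, i+\tfrac32, \ldots, j-\tfrac12\}$ (odd half-integers); odd half-integer variables are written with a hat. The alignment dag of $x$ and $y$ has vertices $v_{k,l}$, $k\in[0:m]$, $l\in[0:n]$, horizontal edges $v_{k,l-1}\to v_{k,l}$ and vertical edges $v_{k-1,l}\to v_{k,l}$ of score $0$, and diagonal edges $v_{k-1,l-1}\to v_{k,l}$ of score $1$ present exactly when $x_k = y_l$. The (semi-local) highest-score matrix $A$ has as entry $A(i,j)$ the maximum score of a path in this dag from the top boundary at column $i$ to the bottom boundary at column $j$ (i.e. the LLCS of $x$ and the substring of $y$ between columns $i$ and $j$), in the standard semi-local framework of Tiskin. A critical point of $A$ is a pair of odd half-integers $(\hat{\imath}, \hat{\jmath})$ such that $A(\hat{\imath}+\tfrac12,\hat{\jmath}-\tfrac12) + 1 = A(\hat{\imath}-\tfrac12,\hat{\jmath}-\tfrac12) = A(\hat{\imath}+\tfrac12,\hat{\jmath}+\tfrac12) = A(\hat{\imath}-\tfrac12,\hat{\jmath}+\tfrac12)$. Known fact (Tiskin): the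 0/1 matrix $D_A$ marking the critical points is a permutation matrix, and $A(i,j) = j - i - D_A^\Sigma(i,j)$, where $D_A^\Sigma(i,j)$ is the number of critical points $(\hat{\imath},\hat{\jmath})$ with $\hat{\imath} > i$ and $\hat{\jmath} < j$. The $(w,r)$-restricted highest-score matrix $A^{w,r}$ is defined by $A^{w,r}(i,j) = A(i,j)$ if $j - i \le w$ and $i \bmod r = j \bmod r = 0$, and $A^{w,r}(i,j)$ undefined otherwise. *)

From mathcomp Require Import all_boot all_order all_algebra.
Set Implicit Arguments. Unset Strict Implicit. Unset Printing Implicit Defensive.
Import Order.TTheory GRing.Theory Num.Theory.
Local Open Scope ring_scope.

(* Length of a longest common subsequence, with a general character
   matching relation [mt]; this is the standard alignment-dag recurrence:
   max of the vertical edge, the horizontal edge, and the diagonal edge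
   (score 1, present iff the characters match). *)
Fixpoint lcs_with (A B : Type) (mt : A -> B -> bool) (s : seq A) (t : seq B)
  : nat :=
  match s with
  | [::] => 0%N
  | a :: s' =>
    (fix lcs_t (t : seq B) : nat :=
       match t with
       | [::] => 0%N
       | b :: t' =>
         maxn (lcs_with mt s' t)
              (maxn (lcs_t t') (mt a b + lcs_with mt s' t')%N)
       end) t
  end.

(* Character of the padded string  ?^m y ?^m  sitting between columns
   l-1 and l (l : int); [None] is the wildcard '?', which matches any
   character. Columns 1..n carry y_1..y_n. *)
Definition ychar (T : Type) (y : seq T) (l : int) : option T :=
  if (0 < l) then onth y (absz l).-1 else None.

Definition wmatch (T : eqType) (a : T) (c : option T) : bool :=
  if c is Some b then a == b else true.

Definition psub (T : Type) (y : seq T) (i j : int) : seq (option T) :=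
  [seq ychar y (i + k%:Z) | k <- iota 1 (absz (j - i))].

(* Tiskin's semi-local highest-score matrix A(i,j), i in [-m:n],
   j in [0:m+n]; A(i,j) = j - i when j < i. *)
Definition hsm (T : eqType) (x y : seq T) (i j : int) : int :=
  if i <= j then (lcs_with (@wmatch T) x (psub y i j))%:Z else j - i.

(* Odd half-integers are encoded by integers: h encodes h + 1/2.
   (h, k) encodes the point (hat i, hat j) = (h + 1/2, k + 1/2), and is a
   critical point of A when
   A(h+1,k) + 1 = A(h,k) = A(h+1,k+1) = A(h,k+1),
   with hat i in <-m:n> and hat j in <0:m+n>. *)
Definition critical (T : eqType) (x y : seq T) (h k : int) : bool :=
  let m := (size x)%:Z in let n := (size y)%:Z in
  [&& - m <= h, h < n, 0 <= k, k < m + n,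
      hsm x y (h + 1) k + 1 == hsm x y h k,
      hsm x y h k == hsm x y (h + 1) (k + 1) &
      hsm x y (h + 1) (k + 1) == hsm x y h (k + 1)].

Definition restricted_dom (m n w r : nat) (i j : int) : bool :=
  [&& - (m%:Z) <= i, i <= n%:Z, 0 <= j, j <= (m + n)%N%:Z,
      j - i <= w%:Z, (i %% r%:Z)%Z == 0 & (j %% r%:Z)%Z == 0].

From mathcomp Require Import all_boot all_order all_algebra zify.
Import Order.TTheory GRing.Theory Num.Theory.

Set Implicit Arguments.
Unset Strict Implicit.
Unset Printing Implicit Defensive.

(* The cross difference A(h,k) + A(h+1,k+1) - A(h,k+1) - A(h+1,k) of the
   highest-score matrix is 0 or 1, by the unit steps and the Monge property
   of LCS lengths, and it is 1 exactly when (h+1/2, k+1/2) is critical.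
   Hence A(i,j) is recovered from three entries of smaller width j - i and
   from the criticality of (i+1/2, j-1/2), whose width j - i - 1 is < w.
   Induction on the width reduces everything to entries with j <= i and to
   entries lying entirely in the wildcard padding, which depend only on m
   and j - i. *)

Lemma cat_eq_catP (T : Type) (v1 v2 u1 u2 : seq T) : v1 ++ v2 = u1 ++ u2 ->
  (exists w, u1 = v1 ++ w /\ v2 = w ++ u2) \/
  (exists w, v1 = u1 ++ w /\ u2 = w ++ v2).
Proof.
elim: v1 u1 => [|a v1 IH] [|b u1] /=.
- by move=> ->; left; exists [::].
- by move=> ->; left; exists (b :: u1).
- by move=> <-; right; exists (a :: v1).
by case=> <- /IH [[w [-> ->]]|[w [-> ->]]]; [left|right]; exists w.
Qed.

Section LcsWith.
Variables (A B : Type) (mt : A -> B -> bool).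
Local Notation lcs := (lcs_with mt).

Lemma lcs_nil_r s : lcs s [::] = 0%N. Proof. by case: s. Qed.

Lemma lcs_cons_cons a s b v : lcs (a :: s) (b :: v) =
  maxn (lcs s (b :: v)) (maxn (lcs (a :: s) v) (mt a b + lcs s v)).
Proof. by []. Qed.

Lemma lcs_cons_l a s v : (lcs s v <= lcs (a :: s) v)%N.
Proof. by case: v => [|b v]; rewrite ?lcs_nil_r // lcs_cons_cons; lia. Qed.

Lemma lcs_cons_r s b v : (lcs s v <= lcs s (b :: v) <= (lcs s v).+1)%N.
Proof.
elim: s v => [|a s IH] v //.
by have := IH v; have := lcs_cons_l a s v; rewrite lcs_cons_cons; lia.
Qed.

Lemma lcs_rcons_r s v b : (lcs s v <= lcs s (rcons v b) <= (lcs s v).+1)%N.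
Proof.
elim: s v => [|a s IH] v //; elim: v => [|c v IHv].
  by have := IH [::]; rewrite (_ : rcons [::] b = [:: b]) // lcs_cons_cons !lcs_nil_r; lia.
by have := IH (c :: v); have := IH v; move: IHv; rewrite rcons_cons !lcs_cons_cons; lia.
Qed.

Lemma lcs_cat_r s v1 v2 : (lcs s v2 <= lcs s (v1 ++ v2))%N.
Proof. by elim: v1 => [|b v1 IH] //=; have := lcs_cons_r s b (v1 ++ v2); lia. Qed.

Lemma lcs_seq1 a v : lcs [:: a] v = has (mt a) v.
Proof.
elim: v => [|b v IH] //; rewrite lcs_cons_cons IH /=.
by case: (mt a b); case: (has _ _).
Qed.

Lemma lcs_cons_cat a s v1 v2 :
  (lcs [:: a] v1 + lcs s v2 <= lcs (a :: s) (v1 ++ v2))%N.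
Proof.
elim: v1 => [|b v1 IH]; first exact: lcs_cons_l.
rewrite cat_cons lcs_cons_cons.
have := lcs_cons_r (a :: s) b (v1 ++ v2); have := lcs_cat_r s v1 v2.
by move: IH; rewrite !lcs_seq1 /=; case: (mt a b); case: (has _ _) => /=; lia.
Qed.

Lemma lcs_cons_split a s v : exists v1 v2, v = v1 ++ v2 /\
  (lcs (a :: s) v <= lcs [:: a] v1 + lcs s v2)%N.
Proof.
elim: v => [|b v [v1 [v2 [-> Hle]]]].
  by exists [::], [::]; rewrite !lcs_nil_r.
rewrite lcs_cons_cons.
have [skip_b|] := leqP (maxn (lcs (a :: s) (v1 ++ v2)) (mt a b + lcs s (v1 ++ v2)))
                       (lcs s (b :: v1 ++ v2)).
  by exists [::], (b :: v1 ++ v2); split => //; rewrite /= lcs_nil_r; lia.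
have [keep_a|match_ab] := leqP (mt a b + lcs s (v1 ++ v2)) (lcs (a :: s) (v1 ++ v2)).
  exists (b :: v1), v2; split => //.
  have : (lcs [:: a] v1 <= lcs [:: a] (b :: v1))%N.
    by rewrite !lcs_seq1 /=; case: (mt a b); case: (has _ _).
  lia.
by exists [:: b], (v1 ++ v2); split => //; rewrite lcs_seq1 /= orbF; lia.
Qed.

Lemma lcs_monge s p u q :
  (lcs s (p ++ u ++ q) + lcs s u <= lcs s (p ++ u) + lcs s (u ++ q))%N.
Proof.
elim: s p u q => [|a s IH] p u q //.
have [v1 [v2 [Epuq Hpuq]]] := lcs_cons_split a s (p ++ u ++ q).
have [u1 [u2 [Eu Hu]]] := lcs_cons_split a s u.
have : v1 ++ v2 = (p ++ u1) ++ (u2 ++ q) by rewrite -Epuq Eu !catA.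
case/cat_eq_catP => [[w [Ev1 Ev2]]|[w [Ev1 Ev2]]].
- have Hpu := lcs_cons_cat a s v1 (w ++ u2).
  have Huq := lcs_cons_cat a s u1 (u2 ++ q).
  have := IH w u2 q.
  have Epu : p ++ u = v1 ++ (w ++ u2) by rewrite Eu catA Ev1 catA.
  have Euq : u ++ q = u1 ++ (u2 ++ q) by rewrite Eu catA.
  by rewrite -Epu in Hpu; rewrite -Euq in Huq; rewrite Ev2 in Hpuq; lia.
- have Hpu := lcs_cons_cat a s (p ++ u1) u2.
  have Huq := lcs_cons_cat a s (u1 ++ w) v2.
  have : (lcs [:: a] (p ++ u1 ++ w) + lcs [:: a] u1 <=
          lcs [:: a] (p ++ u1) + lcs [:: a] (u1 ++ w))%N.
    by rewrite !lcs_seq1 !has_cat; case: (has _ p); case: (has _ u1); case: (has _ w).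
  have Epu : p ++ u = (p ++ u1) ++ u2 by rewrite Eu catA.
  have Euq : u ++ q = (u1 ++ w) ++ v2 by rewrite Eu -catA Ev2 catA.
  by rewrite -Epu in Hpu; rewrite -Euq in Huq; rewrite Ev1 -catA in Hpuq; lia.
Qed.

End LcsWith.

Local Open Scope ring_scope.

Section HighestScore.
Variable T : eqType.
Implicit Types (x y : seq T) (h i j : int).

Lemma lcs_wild (s : seq T) d :
  lcs_with (@wmatch T) s (nseq d None) = minn (size s) d.
Proof.
elim: s d => [|a s IH] d; first by rewrite min0n.
elim: d => [|d IHd]; first by rewrite lcs_nil_r minn0.
rewrite [nseq _ _]/= lcs_cons_cons -[None :: _]/(nseq d.+1 None) !IH IHd /=.
lia.
Qed.

Definition window y i (d : nat) := [seq ychar y (i + k%:Z) | k <- iota 1 d].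

Lemma psub_window y i (d : nat) : psub y i (i + d%:Z) = window y i d.
Proof. by rewrite /psub /window addrAC subrr add0r. Qed.

Lemma window_rcons y i d :
  window y i d.+1 = rcons (window y i d) (ychar y (i + d.+1%:Z)).
Proof. by rewrite /window -[d.+1]addn1 iotaD map_cat cats1 add1n addn1. Qed.

Lemma window_cons y i d :
  window y i d.+1 = ychar y (i + 1) :: window y (i + 1) d.
Proof.
rewrite /window [iota 1 d.+1]/= (iotaDl 1 1 d) map_cons -map_comp; congr (_ :: _).
by apply: eq_map => k /=; rewrite -addrA; congr (ychar y (i + _)); lia.
Qed.

Lemma window_wild y i d :
  (size y)%:Z <= i \/ i + d%:Z <= 0 -> window y i d = nseq d None.
Proof.
move=> outside.
suff -> : window y i d = nseq (size (window y i d)) None by rewrite size_map size_iota.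
apply/all_pred1P/allP => c /mapP [k]; rewrite mem_iota => /andP [k1 k2] -> /=.
rewrite /ychar; case: ifP => // pos; apply/eqP; rewrite onth_default //.
case E: (i + k%:Z) pos => [p|p] // p_gt0.
have : (size y)%:Z <= p%:Z - 1 by lia.
by rewrite /=; lia.
Qed.

Lemma hsm_window x y i d :
  hsm x y i (i + d%:Z) = (lcs_with (@wmatch T) x (window y i d))%:Z.
Proof. by rewrite /hsm ifT ?psub_window //; lia. Qed.

Lemma hsm_ge x y i j : j <= i -> hsm x y i j = j - i.
Proof.
move=> ji; rewrite /hsm; case: ifP => // ij.
have -> : j = i + 0%:Z by lia.
by rewrite psub_window /window /= lcs_nil_r; lia.
Qed.

Lemma hsm_wild x y i j : i <= j -> (size y)%:Z <= i \/ j <= 0 ->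
  hsm x y i j = (minn (size x) (absz (j - i)))%:Z.
Proof.
move=> ij outside; have -> : j = i + (absz (j - i))%:Z by lia.
by rewrite hsm_window window_wild ?lcs_wild; [congr (_%:Z); lia | lia].
Qed.

Definition cross_unit x y h k : bool :=
  [&& hsm x y (h + 1) k + 1 == hsm x y h k,
      hsm x y h k == hsm x y (h + 1) (k + 1) &
      hsm x y (h + 1) (k + 1) == hsm x y h (k + 1)].

Lemma criticalE x y h k :
  - (size x)%:Z <= h -> h < (size y)%:Z -> 0 <= k ->
  k < (size x)%:Z + (size y)%:Z -> critical x y h k = cross_unit x y h k.
Proof. by move=> h_ge h_lt k_ge k_lt; rewrite /critical h_ge h_lt k_ge k_lt. Qed.

Lemma hsm_cross_diff x y h k : h <= k ->
  hsm x y h k + hsm x y (h + 1) (k + 1) - hsm x y h (k + 1) - hsm x y (h + 1) k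
  = (cross_unit x y h k : nat)%:Z.
Proof.
move=> hk; rewrite /cross_unit; have -> : k = h + (absz (k - h))%:Z by lia.
case: (absz (k - h)) => [|d].
  rewrite addr0 (@hsm_ge x y h h (lexx h)) (@hsm_ge x y (h + 1) h) ?lerDl //.
  rewrite (@hsm_ge x y (h + 1) (h + 1) (lexx _)) (_ : h + 1 = h + 1%:Z) // hsm_window.
  have := lcs_cons_r (@wmatch T) x (ychar y (h + 1)) [::].
  rewrite window_cons /window /= lcs_nil_r.
  by case: eqP => ?; case: eqP => ?; case: eqP => ? /=; lia.
set u := window y (h + 1) d; set a := ychar y (h + 1).
set b := ychar y (h + 1 + d.+1%:Z).
have -> : hsm x y h (h + d.+1%:Z) = (lcs_with (@wmatch T) x (a :: u))%:Z.
  by rewrite hsm_window window_cons.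
have -> : hsm x y h (h + d.+1%:Z + 1) =
          (lcs_with (@wmatch T) x (a :: rcons u b))%:Z.
  by rewrite (_ : h + d.+1%:Z + 1 = h + d.+2%:Z); [rewrite hsm_window window_cons window_rcons | lia].
have -> : hsm x y (h + 1) (h + d.+1%:Z) = (lcs_with (@wmatch T) x u)%:Z.
  by rewrite (_ : h + d.+1%:Z = h + 1 + d%:Z) ?hsm_window //; lia.
have -> : hsm x y (h + 1) (h + d.+1%:Z + 1) =
          (lcs_with (@wmatch T) x (rcons u b))%:Z.
  by rewrite (_ : h + d.+1%:Z + 1 = h + 1 + d.+1%:Z) ?hsm_window ?window_rcons //; lia.
have := lcs_cons_r (@wmatch T) x a u.
have := lcs_rcons_r (@wmatch T) x u b.
have := lcs_cons_r (@wmatch T) x a (rcons u b).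
have := lcs_rcons_r (@wmatch T) x (a :: u) b.
have := lcs_monge (@wmatch T) x [:: a] u [:: b].
rewrite rcons_cons !cats1 /=.
by case: eqP => ?; case: eqP => ?; case: eqP => ? /=; lia.
Qed.

Section NearDiagonal.
Variables (x y x' y' : seq T) (w : nat).
Hypotheses (size_x : size x' = size x) (size_y : size y' = size y).
Hypothesis critical_near : forall h k : int,
  k - h < w%:Z -> critical x y h k = critical x' y' h k.
Lemma hsm_eq_near_diagonal i j :
  - (size x)%:Z <= i -> j <= (size x)%:Z + (size y)%:Z -> j - i <= w%:Z ->
  hsm x y i j = hsm x' y' i j.
Proof.
have [N width] : exists N : nat, j - i <= N%:Z by exists (absz (j - i)); lia.
elim: N i j width => [|N IH] i j width i_ge j_le near.
  by rewrite !hsm_ge //; lia.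
have [ji|ij] := lerP j i; first by rewrite !hsm_ge.
have [/orP outside|/norP [i_lt j_gt]] := boolP (((size y)%:Z <= i) || (j <= 0)).
  by rewrite !hsm_wild ?size_x ?size_y ?(ltW ij).
have -> : j = (j - 1) + 1 by rewrite subrK.
have ij1 : i <= j - 1 by lia.
have cross_eq : cross_unit x y i (j - 1) = cross_unit x' y' i (j - 1).
  rewrite -criticalE -?criticalE ?size_x ?size_y ?critical_near //; lia.
have := hsm_cross_diff x y ij1; have := hsm_cross_diff x' y' ij1.
have := IH i (j - 1); have := IH (i + 1) (j - 1); have := IH (i + 1) (j - 1 + 1).
rewrite cross_eq; lia.
Qed.

End NearDiagonal.

End HighestScore.

Theorem proposition1 (T : eqType) (x y x' y' : seq T) (w r : nat) :
  (0 < w)%N -> (0 < r)%N ->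
  size x' = size x -> size y' = size y ->
  (forall h k : int, k - h < w%:Z -> critical x y h k = critical x' y' h k) ->
  forall i j : int, restricted_dom (size x) (size y) w r i j ->
    hsm x y i j = hsm x' y' i j.
Proof.
move=> _ _ size_x size_y critical_near i j.
case/and5P=> i_ge _ _ j_le /andP[near _].
by apply: (hsm_eq_near_diagonal size_x size_y critical_near) => //; lia.
Qed.
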